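(* Let $P$ be a finite poset, $\epsilon\in\{1,-1\}$, $n\ge2$ an integer and $\xi\in S^{(n\epsilon)}$. Define $\xi_1\in\mathbb Z^{P^-}$ by $\xi_1(w)=\lfloor \xi(w)/n\rfloor$ if $w$ is a maximal element of $P$ or $w=-\infty$, and $\xi_1(w)=\lfloor \xi^{+\uparrow}(w)/n\rfloor-\lfloor \xi^{+\prime\uparrow}(w)/n\rfloor$ otherwise. Then (a) $\xi_1^{+\uparrow}(z)=\lfloor \xi^{+\uparrow}(z)/n\rfloor$ for every $z\in P$, and $\max\{\xi_1^+(C)\}=\lfloor \tfrac1n\max\{\xi^+(C)\}\rfloor$, maxima over maximal chains $C$ of $P$; (b) $\xi_1\in S^{(\epsilon)}$.
   Context: $P^-=P\cup\{-\infty\}$, $P^+=P\cup\{+\infty\}$, with $-\infty<z<+\infty$ for all $z\in P$; $a\lessdot b$ means $b$ covers $a$. $\xi^+(B)=\sum_{b\in B}\xi(b)$. For $z\in P$: $\xi^{+\uparrow}(z)=\max\sum_{\ell=0}^s\xi(z_\ell)$ and $\xi^{+\prime\uparrow}(z)=\max\sum_{\ell=1}^s\xi(z_\ell)$ (empty sum $0$), maxima over all $z=z_0\lessdot z_1\lessdot\cdots\lessdot z_s\lessdot+\infty$ in $P^+$. For $m\in\mathbb Z$, $S^{(m)}=\{\xi\in\mathbb Z^{P^-}:\xi(x)\ge m\ \forall x\in P,\ \xi(-\infty)\ge\xi^+(C)+m$ for every maximal chain $C$ of $P\}$. *)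

From HB Require Import structures.
From mathcomp Require Import all_boot all_order all_algebra.
Set Implicit Arguments. Unset Strict Implicit. Unset Printing Implicit Defensive.
Import Order.TTheory GRing.Theory Num.Theory.
Local Open Scope order_scope.

Section Poset.
Context {d : Order.disp_t} {P : finPOrderType d}.

Definition maxelt (x : P) : bool := [forall y : P, ~~ (x < y)].

Definition covers (x y : P) : bool :=
  (x < y) && [forall w : P, ~~ ((x < w) && (w < y))].

(* s = [z_1;...;z_s] is such that z = z_0 <. z_1 <. ... <. z_s <. +infty in P^+ *)
Definition upchain (z : P) (s : seq P) : bool :=
  path covers z s && maxelt (last z s).

(* all sequences of elements of P of length < #|P|.+1 (any upchain is strictly
   increasing, so has length <= #|P| - 1; hence this enumeration is exhaustive) *)
Definition short_seqs : seq (seq P) :=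
  flatten [seq [seq tval t | t : k.-tuple P] | k <- iota 0 #|P|.+1].

Definition upchains (z : P) : seq (seq P) := [seq s <- short_seqs | upchain z s].

Definition maxl (l : seq int) : int := foldr Num.max (head 0%R l) l.

(* xi^{+ up}(z) : max over upchains of sum_{l=0}^s xi(z_l) *)
Definition upsum (xi : P -> int) (z : P) : int :=
  maxl [seq (\sum_(x <- z :: s) xi x)%R | s <- upchains z].

(* xi^{+' up}(z) : max over upchains of sum_{l=1}^s xi(z_l) *)
Definition upsum' (xi : P -> int) (z : P) : int :=
  maxl [seq (\sum_(x <- s) xi x)%R | s <- upchains z].

Definition is_chain (C : {set P}) : bool :=
  [forall x in C, forall y in C, (x <= y) || (y <= x)].

Definition maxchain (C : {set P}) : bool :=
  is_chain C && [forall D : {set P}, (is_chain D && (C \subset D)) ==> (D == C)].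

Definition chainsum (xi : P -> int) (C : {set P}) : int := (\sum_(b in C) xi b)%R.

Definition maxchainsum (xi : P -> int) : int :=
  maxl [seq chainsum xi C | C <- enum [set C : {set P} | maxchain C]].

(* Elements of Z^{P^-} are functions option P -> int, None standing for -infty. *)
Definition restr (xi : option P -> int) : P -> int := fun x => xi (Some x).

Definition inS (m : int) (xi : option P -> int) : Prop :=
  (forall x : P, (m <= xi (Some x))%R) /\
  (forall C : {set P}, maxchain C -> (chainsum (restr xi) C + m <= xi None)%R).

(* xi_1 from the theorem; floor(a/n) is the intdiv quotient (a %/ n)%Z, n > 0 *)
Definition xi1 (n : nat) (xi : option P -> int) : option P -> int :=
  fun w => match w with
  | None => (xi None %/ n%:Z)%Z
  | Some x => if maxelt x then (xi (Some x) %/ n%:Z)%Z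
              else ((upsum (restr xi) x %/ n%:Z)%Z - (upsum' (restr xi) x %/ n%:Z)%Z)%R
  end.

End Poset.

From HB Require Import structures.
From mathcomp Require Import all_boot all_order all_algebra.
Import Order.TTheory GRing.Theory Num.Theory.

(* Let xi be given, write g for its restriction to P, g1 for the restriction
   of xi_1, and U(z), U'(z) for xi^{+up}(z), xi^{+'up}(z).  The proof rests on
   two recursions:
   - U(z) = g(z) + U'(z), and U'(z) is the maximum of U(w) over the covers w
     of z (0 if z is maximal);
   - the maximal chains of P are exactly the sets {z_0 <. ... <. z_s} with z_0
     minimal and z_s maximal, so max_C g^+(C) is the maximum of U(z) over the
     minimal elements z (0 if P is empty).
   Since u |-> floor(u/n) is nondecreasing it commutes with maxima of lists;
   by induction along the covering relation (from the top of P) this gives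
   U_{g1}(z) = floor(U(z)/n), and then the equality of maximal chain sums.
   Part (b) follows from floor((n e + a)/n) = e + floor(a/n); of the
   hypotheses on e and n only n > 0 is needed. *)

Local Open Scope ring_scope.
Local Open Scope order_scope.

Section MaxList.
Set Implicit Arguments. Unset Strict Implicit.

Lemma foldr_max_ub (a : int) l x : x \in a :: l -> x <= foldr Num.max a l.
Proof.
elim: l => [|y l IH] /=; first by rewrite inE => /eqP ->.
rewrite !inE le_max => /or3P[/eqP xa | /eqP -> | xl]; last first.
- by rewrite IH ?inE ?xl ?orbT.
- by rewrite lexx.
- by rewrite IH ?inE ?xa ?eqxx ?orbT.
Qed.

Lemma foldr_max_mem (a : int) l : foldr Num.max a l \in a :: l.
Proof.
elim: l => [|y l IH] /=; first by rewrite inE.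
rewrite /Num.max; case: ifP => _; first by move: IH; rewrite !inE => /orP[]->; rewrite ?orbT.
by rewrite !inE eqxx orbT.
Qed.

Lemma maxl_ub (l : seq int) x : x \in l -> x <= maxl l.
Proof. by case: l => // a l xl; apply: foldr_max_ub; rewrite inE xl orbT. Qed.

Lemma maxl_mem (l : seq int) : l != [::] -> maxl l \in l.
Proof.
case: l => // a l _; have := foldr_max_mem a (a :: l).
by rewrite /maxl /= inE => /orP[/eqP ->|]; rewrite ?mem_head.
Qed.

Lemma maxl_le (l1 l2 : seq int) : l1 != [::] ->
  {in l1, forall x, exists2 y, y \in l2 & x <= y} -> maxl l1 <= maxl l2.
Proof.
move=> /maxl_mem m1 dom; have [y yl2 le_y] := dom _ m1.
exact: le_trans le_y (maxl_ub yl2).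
Qed.

(* Nondecreasing maps commute with maxima (maxl [::] = 0 must be preserved). *)
Lemma maxl_map_mono (F : int -> int) (l : seq int) :
  {homo F : x y / x <= y} -> (l = [::] -> F 0 = 0) -> maxl (map F l) = F (maxl l).
Proof.
case: l => [_ F0|a l homF _]; first by rewrite F0.
apply: le_anti; apply/andP; split.
  have /mapP[x xl ->] := @maxl_mem (map F (a :: l)) isT.
  exact/homF/maxl_ub.
exact/maxl_ub/map_f/maxl_mem.
Qed.

End MaxList.

Section Poset.
Context {d : Order.disp_t} {P : finPOrderType d}.
Set Implicit Arguments. Unset Strict Implicit.
Implicit Types (x y z v w c : P) (s : seq P) (C D : {set P}) (g : P -> int).

Definition minimal z : bool := [forall y, ~~ (y < z)].

Lemma covers_lt z w : covers z w -> z < w.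
Proof. by case/andP. Qed.

Lemma exists_minimal_in (A : {set P}) x0 : x0 \in A ->
  exists2 z, z \in A & forall y, y \in A -> ~~ (y < z).
Proof.
move=> x0A; pose below y := #|[set v | v < y]|.
case: (arg_minnP below x0A) => z zA zmin; exists z => // y yA; apply/negP => yz.
have := zmin y yA; rewrite leqNgt => /negP; apply; apply: proper_card.
apply/properP; split; first by apply/subsetP => u; rewrite !inE => /lt_trans; apply.
by exists y; rewrite !inE ?yz ?ltxx.
Qed.

(* Induction along the covering relation, downwards from the maximal elements:
   the strict upper set of z strictly shrinks when passing to a cover. *)
Lemma covers_ind (Q : P -> Prop) :
  (forall z, (forall w, covers z w -> Q w) -> Q z) -> forall z, Q z.
Proof.
move=> IH z; have [k] := ubnP #|[set y | z < y]|.
elim: k z => // k IHk z zk; apply: IH => w /covers_lt zw; apply: IHk.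
rewrite ltnS in zk; apply: (leq_trans _ zk); apply: proper_card; apply/properP; split.
  by apply/subsetP => y; rewrite !inE; apply: lt_trans.
by exists w; rewrite !inE ?zw ?ltxx.
Qed.

Lemma exists_cover z : ~~ maxelt z -> exists w, covers z w.
Proof.
case/forallPn => y0; rewrite negbK => zy0.
have [|w] := @exists_minimal_in [set y | z < y] y0; first by rewrite inE.
rewrite inE => zw wmin; exists w; rewrite /covers zw; apply/forallP => v.
by apply/negP => /andP[zv vw]; move: (wmin v); rewrite inE zv vw => /(_ isT).
Qed.

Lemma upchain_nil z : upchain z [::] = maxelt z.
Proof. by []. Qed.

Lemma upchain_cons z w s : upchain z (w :: s) = covers z w && upchain w s.
Proof. by rewrite /upchain /= andbA. Qed.

Lemma upchain_maxelt z s : maxelt z -> upchain z s -> s = [::].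
Proof.
case: s => // w s /forallP/(_ w) zw; rewrite upchain_cons => /andP[/covers_lt].
by rewrite (negbTE zw).
Qed.

Lemma upchain_path z s : upchain z s -> path <%O z s.
Proof. by case/andP => + _; apply: sub_path => x y /covers_lt. Qed.

Lemma upchain_ge z s : upchain z s -> {in z :: s, forall c, z <= c}.
Proof.
move=> /upchain_path/(order_path_min lt_trans)/allP zs c.
by rewrite inE => /orP[/eqP -> // | /zs /ltW].
Qed.

Lemma upchain_uniq z s : upchain z s -> uniq (z :: s).
Proof.
move/upchain_path => zs.
exact: (sorted_uniq (@lt_trans _ P) (@ltxx _ P) (zs : sorted _ (z :: s))).
Qed.

Lemma exists_upchain z : exists s, upchain z s.
Proof.
elim/covers_ind: z => z IH; case/boolP: (maxelt z) => zmax.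
  by exists [::]; rewrite upchain_nil.
have [w zw] := exists_cover zmax; have [s ws] := IH w zw.
by exists (w :: s); rewrite upchain_cons zw.
Qed.

(* The enumeration upchains z is exhaustive: upchains are shorter than #|P|. *)
Lemma mem_upchains z s : (s \in upchains z) = upchain z s.
Proof.
rewrite /upchains mem_filter andb_idr // => zs; apply/flattenP.
have size_s : (size s < #|P|.+1)%N.
  have := max_card (mem (z :: s)); rewrite (card_uniqP (upchain_uniq zs)) /=.
  by rewrite ltnS; apply: ltnW.
exists [seq tval t | t : (size s).-tuple P]; first by apply/mapP; exists (size s); rewrite ?mem_iota.
by rewrite [X in X \in _](_ : s = in_tuple s) //; apply: map_f; rewrite mem_enum.
Qed.

Lemma upchains_nonnil z : upchains z != [::].
Proof.
have [s zs] := exists_upchain z; apply/eqP => E.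
by move: zs; rewrite -mem_upchains E.
Qed.

Lemma upsum_ub g z s : upchain z s -> \sum_(x <- z :: s) g x <= upsum g z.
Proof. by move=> zs; apply/maxl_ub/map_f; rewrite mem_upchains. Qed.

Lemma upsum_attained g z :
  exists2 s, upchain z s & upsum g z = \sum_(x <- z :: s) g x.
Proof.
have /mapP[s] : upsum g z \in [seq \sum_(x <- z :: s) g x | s <- upchains z].
  by apply: maxl_mem; rewrite -size_eq0 size_map size_eq0; apply: upchains_nonnil.
by rewrite mem_upchains => zs ->; exists s.
Qed.

Lemma upsumE g z : upsum g z = g z + upsum' g z.
Proof.
rewrite /upsum /upsum' -(@maxl_map_mono (+%R (g z))); first 1 last.
- by move=> x y; rewrite lerD2l.
- by move/eqP; rewrite -size_eq0 size_map size_eq0 (negbTE (upchains_nonnil z)).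
by rewrite -map_comp; congr maxl; apply: eq_map => s; rewrite /= big_cons.
Qed.

Lemma upsum'_maxelt g z : maxelt z -> upsum' g z = 0.
Proof.
move=> zmax; have /mapP[s] : upsum' g z \in [seq \sum_(x <- s) g x | s <- upchains z].
  by apply: maxl_mem; rewrite -size_eq0 size_map size_eq0; apply: upchains_nonnil.
by rewrite mem_upchains => /(upchain_maxelt zmax) -> ->; rewrite big_nil.
Qed.

Lemma upsum'E g z :
  upsum' g z = maxl [seq upsum g w | w <- enum [pred w | covers z w]].
Proof.
case/boolP: (maxelt z) => zmax.
  suff -> : enum [pred w | covers z w] = [::] by rewrite upsum'_maxelt.
  apply: size0nil; rewrite -cardE; apply: eq_card0 => w; rewrite !inE.
  by apply/negbTE/negP => /covers_lt; move/forallP: zmax => /(_ w)/negbTE ->.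
have [w0 zw0] := exists_cover zmax.
apply: le_anti; apply/andP; split; apply: maxl_le.
- by rewrite -size_eq0 size_map size_eq0; apply: upchains_nonnil.
- move=> x /mapP[[|w s] + ->]; rewrite mem_upchains.
    by rewrite upchain_nil (negbTE zmax).
  rewrite upchain_cons => /andP[zw ws]; exists (upsum g w).
    by apply: map_f; rewrite mem_enum.
  exact: (upsum_ub g ws).
- by rewrite -size_eq0 size_map -cardE -lt0n; apply/card_gt0P; exists w0.
- move=> x /mapP[w + ->]; rewrite mem_enum inE => zw.
  have [s ws ->] := upsum_attained g w.
  exists (\sum_(x <- w :: s) g x) => //.
  by apply: map_f; rewrite mem_upchains upchain_cons zw.
Qed.

(* Theorem (a), first part: U_{g1}(z) = floor(U(z)/n), by induction along
   covers; by construction g1(z) = floor(U(z)/n) - floor(U'(z)/n). *)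
Lemma upsum_xi1 (n : nat) (xi : option P -> int) z :
  upsum (restr (xi1 n xi)) z = (upsum (restr xi) z %/ n%:Z)%Z.
Proof.
elim/covers_ind: z => z IH.
have upsum'_xi1 : upsum' (restr (xi1 n xi)) z = (upsum' (restr xi) z %/ n%:Z)%Z.
  rewrite !upsum'E -(@maxl_map_mono (fun u => (u %/ n%:Z)%Z)); last by move=> _; rewrite div0z.
    by rewrite -map_comp; congr maxl; apply/eq_in_map => w; rewrite mem_enum => /IH.
  by move=> x y; apply: lez_pdiv2r.
rewrite upsumE upsum'_xi1 /restr /=; case: ifP => [zmax | _]; last by rewrite subrK.
by rewrite !upsum'_maxelt // div0z !addr0 upsumE upsum'_maxelt // addr0.
Qed.

Definition complete_above z C : Prop :=
  forall v, z <= v -> {in C, forall c, c >=< v} -> v \in C.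

Lemma is_chainP C : reflect {in C &, forall x y, x >=< y} (is_chain C).
Proof.
apply: (iffP forall_inP) => [Cch x y xC | Cch x xC]; last first.
  by apply/forall_inP => y; apply: Cch.
by move/forall_inP: (Cch x xC); apply.
Qed.

Lemma chain_sub C D : D \subset C -> is_chain C -> is_chain D.
Proof.
move=> /subsetP DC /is_chainP Cch; apply/is_chainP => x y xD yD.
by apply: Cch; apply: DC.
Qed.

Lemma chainU1 v C : is_chain C -> {in C, forall c, c >=< v} -> is_chain (v |: C).
Proof.
move=> /is_chainP Cch vC; apply/is_chainP => x y; rewrite !inE.
case/orP => [/eqP-> | xC] /orP[/eqP-> | yC]; rewrite ?comparablexx //.
- by rewrite comparable_sym vC.
- exact: vC.
- exact: Cch.
Qed.

Lemma maxchainP C :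
  reflect (is_chain C /\ forall v, {in C, forall c, c >=< v} -> v \in C) (maxchain C).
Proof.
apply: (iffP andP) => [[Cch /forallP Cmax] | [Cch Ccompl]]; split => //.
  move=> v vC; have /implyP := Cmax (v |: C).
  by rewrite chainU1 // subsetUr => /(_ isT)/eqP <-; rewrite setU11.
apply/forallP => D; apply/implyP => /andP[/is_chainP Dch CD].
rewrite eqEsubset CD andbT; apply/subsetP => v vD; apply: Ccompl => c cC.
by apply: Dch => //; apply: (subsetP CD).
Qed.

Lemma chain_minimum C x0 : is_chain C -> x0 \in C ->
  exists2 z, z \in C & {in C, forall c, z <= c}.
Proof.
move=> /is_chainP Cch /exists_minimal_in[z zC zmin]; exists z => // c cC.
have /orP[// | cz] := Cch z c zC cC.
by move: cz; rewrite le_eqVlt (negbTE (zmin c cC)) orbF => /eqP ->.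
Qed.

(* A chain with least element z, complete above z, is an upchain from z:
   its second smallest element covers z, and we recurse above it. *)
Lemma complete_upchain z C : is_chain C -> z \in C -> {in C, forall c, z <= c} ->
  complete_above z C -> exists2 s, upchain z s & C = [set x in z :: s].
Proof.
elim/covers_ind: z C => z IH C Cch zC zle Ccompl.
have C_split : C = z |: C :\ z by rewrite setD1K.
have in_C' v : z < v -> {in C :\ z, forall c, c >=< v} -> v \in C :\ z.
  move=> zv vC'; rewrite !inE (gt_eqF zv) /=; apply: Ccompl (ltW zv) _ => c cC.
  have [-> | cz] := eqVneq c z; first exact/le_comparable/ltW.
  by apply: vC'; rewrite !inE cz.
have [C'0 | [x0 x0C']] := set_0Vmem (C :\ z).
  exists [::]; last by rewrite C_split C'0; apply/setP => x; rewrite !inE orbF.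
  apply/forallP => y; apply/negP => zy.
  suff : y \in C :\ z by rewrite C'0 inE.
  by apply: in_C' zy _ => c; rewrite C'0 inE.
have C'ch : is_chain (C :\ z) by apply: chain_sub Cch; apply: subD1set.
have [w wC' wle] := chain_minimum C'ch x0C'.
have zw : z < w by case/setD1P: wC' => wz /zle; rewrite lt_neqAle eq_sym wz.
have zcw : covers z w.
  rewrite /covers zw; apply/forallP => v; apply/negP => /andP[zv vw].
  have /wle wv : v \in C :\ z.
    apply: in_C' zv _ => c /wle wc; rewrite comparable_sym.
    exact/le_comparable/(le_trans (ltW vw) wc).
  by move: (lt_le_trans vw wv); rewrite ltxx.
have C'compl : complete_above w (C :\ z).
  by move=> v wv; apply: in_C' (lt_le_trans zw wv).
have [s ws C'E] := IH w zcw (C :\ z) C'ch wC' wle C'compl.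
exists (w :: s); first by rewrite upchain_cons zcw.
by rewrite C_split C'E; apply/setP => x; rewrite !inE.
Qed.

Lemma upchain_chain z s : upchain z s -> is_chain [set x in z :: s].
Proof.
elim: s z => [|w s IH] z zs.
  by apply/is_chainP => x y; rewrite !inE => /eqP-> /eqP->; rewrite comparablexx.
have -> : [set x in z :: w :: s] = z |: [set x in w :: s] by apply/setP => x; rewrite !inE.
move: (zs); rewrite upchain_cons => /andP[_ ws].
apply: chainU1 (IH w ws) _ => c cws; rewrite comparable_sym.
by rewrite in_set in cws; apply/le_comparable/(upchain_ge zs)/mem_behead.
Qed.

Lemma upchain_complete z s : upchain z s -> complete_above z [set x in z :: s].
Proof.
elim: s z => [|w s IH] z zs v zv vC.
  rewrite !inE; apply/contraT => vz; move: zs; rewrite upchain_nil.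
  by move/forallP/(_ v); rewrite lt_def vz zv.
move: zs; rewrite upchain_cons => /andP[zw ws].
have /orP[wv | vw] : w >=< v by apply: vC; rewrite !inE eqxx orbT.
  have : v \in [set x in w :: s].
    by apply: (IH w ws v wv) => c; rewrite !inE => cws; apply: vC; rewrite !inE cws orbT.
  by rewrite !inE => ->; rewrite orbT.
rewrite !inE; case: (eqVneq v w) => [_ | vw']; first by rewrite orbT.
case: (eqVneq v z) => [// | vz].
case/andP: zw => _ /forallP/(_ v).
by rewrite lt_def vz zv lt_neqAle vw' vw.
Qed.

Lemma maxchain_upchain C : maxchain C -> C != set0 ->
  exists z s, [/\ minimal z, upchain z s & C = [set x in z :: s]].
Proof.
move=> /maxchainP[Cch Cmax] /set0Pn[x0 x0C].
have [z zC zle] := chain_minimum Cch x0C.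
have zmin : minimal z.
  apply/forallP => y; apply/negP => yz.
  have /zle zy : y \in C.
    apply: Cmax => c /zle zc; rewrite comparable_sym.
    exact/le_comparable/ltW/(lt_le_trans yz zc).
  by move: (lt_le_trans yz zy); rewrite ltxx.
have [s zs CE] := complete_upchain Cch zC zle (fun v _ => Cmax v).
by exists z, s.
Qed.

Lemma upchain_maxchain z s : minimal z -> upchain z s -> maxchain [set x in z :: s].
Proof.
move=> /forallP zmin zs; apply/maxchainP; split; first exact: upchain_chain.
move=> v vC; apply: (upchain_complete zs) (vC).
have /orP[// | vz] : z >=< v by apply: vC; rewrite !inE eqxx.
by move: vz; rewrite le_eqVlt (negbTE (zmin v)) orbF => /eqP ->.
Qed.

Lemma chainsum_upchain g z s : upchain z s ->
  chainsum g [set x in z :: s] = \sum_(x <- z :: s) g x.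
Proof.
move=> /upchain_uniq zs; rewrite /chainsum (big_uniq _ zs).
by apply: eq_bigl => x; rewrite inE.
Qed.

Lemma exists_maxchain : exists C, maxchain C.
Proof.
have ch0 : is_chain (set0 : {set P}) by apply/is_chainP => x y; rewrite inE.
case: (@arg_maxnP {set P} set0 is_chain (fun C => #|C|) ch0) => C Cch Cbig.
exists C; apply/andP; split => //; apply/forallP => D; apply/implyP => /andP[Dch CD].
by rewrite eq_sym eqEcard CD; apply: Cbig.
Qed.

Lemma maxchainsums_nonnil g :
  [seq chainsum g C | C <- enum [set C | maxchain C]] != [::].
Proof.
have [C Cmax] := exists_maxchain.
by rewrite -size_eq0 size_map -cardE -lt0n; apply/card_gt0P; exists C; rewrite inE.
Qed.

Lemma maxchainsum_ub g C : maxchain C -> chainsum g C <= maxchainsum g.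
Proof. by move=> Cmax; apply/maxl_ub/map_f; rewrite mem_enum inE. Qed.

Lemma maxchainsum_attained g :
  exists2 C, maxchain C & maxchainsum g = chainsum g C.
Proof.
have /mapP[C] := maxl_mem (maxchainsums_nonnil g).
by rewrite mem_enum inE => Cmax sumC; exists C.
Qed.

Lemma maxchainsumE g :
  maxchainsum g = maxl [seq upsum g z | z <- enum [pred z | minimal z]].
Proof.
case: (pickP (@predT P)) => [x0 _ | P0]; last first.
  have -> : enum [pred z | minimal z] = [::].
    by apply: size0nil; rewrite -cardE; apply: eq_card0 => x; have := P0 x.
  have [C _ ->] := maxchainsum_attained g.
  by rewrite /chainsum big1 // => x; have := P0 x.
apply: le_anti; apply/andP; split; apply: maxl_le.
- exact: maxchainsums_nonnil.
- move=> _ /mapP[C + ->]; rewrite mem_enum inE => Cmax.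
  have [|z [s [zmin zs ->]]] := maxchain_upchain Cmax.
    apply/eqP => C0; case/maxchainP: (Cmax) => _ Ccompl.
    suff : x0 \in C by rewrite C0 inE.
    by apply: Ccompl => c; rewrite C0 inE.
  exists (upsum g z); first by apply: map_f; rewrite mem_enum.
  by rewrite chainsum_upchain // upsum_ub.
- have [z _ zmin] := exists_minimal_in (in_setT x0).
  rewrite -size_eq0 size_map -cardE -lt0n; apply/card_gt0P; exists z.
  by rewrite inE; apply/forallP => y; apply: zmin; rewrite inE.
- move=> _ /mapP[z + ->]; rewrite mem_enum inE => zmin.
  have [s zs ->] := upsum_attained g z.
  exists (chainsum g [set x in z :: s]); last by rewrite chainsum_upchain.
  by apply: map_f; rewrite mem_enum inE upchain_maxchain.
Qed.

Lemma maxchainsum_xi1 (n : nat) (xi : option P -> int) :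
  maxchainsum (restr (xi1 n xi)) = (maxchainsum (restr xi) %/ n%:Z)%Z.
Proof.
rewrite !maxchainsumE -(@maxl_map_mono (fun u => (u %/ n%:Z)%Z)).
- by rewrite -map_comp; congr maxl; apply: eq_map => z; apply: upsum_xi1.
- by move=> x y; apply: lez_pdiv2r.
- by move=> _; rewrite div0z.
Qed.

End Poset.

(* From e n + a <= b infer e + floor(a/n) <= floor(b/n), since
   floor((e n + a)/n) = e + floor(a/n) and floor(./n) is monotone. *)
Lemma divz_addl_le (n : nat) (e a b : int) : (0 < n)%N ->
  e * n%:Z + a <= b -> e + (a %/ n%:Z)%Z <= (b %/ n%:Z)%Z.
Proof.
move=> n_gt0 le_ab; rewrite -divzMDl; last by rewrite eqz_nat -lt0n.
exact: lez_pdiv2r.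
Qed.

Theorem mainTheorem5 (d : Order.disp_t) (P : finPOrderType d)
  (eps : int) (n : nat) (xi : option P -> int) :
  (eps = 1 \/ eps = -1)%R ->
  (2 <= n)%N ->
  inS (n%:Z * eps)%R xi ->
  ((forall z : P, upsum (restr (xi1 n xi)) z = (upsum (restr xi) z %/ n%:Z)%Z) /\
   maxchainsum (restr (xi1 n xi)) = (maxchainsum (restr xi) %/ n%:Z)%Z) /\
  inS eps (xi1 n xi).
Proof.
move=> _ n_ge2 [xi_ge xi_chains].
have n_gt0 : (0 < n)%N by apply: leq_trans n_ge2.
split; first by split; [apply: upsum_xi1 | apply: maxchainsum_xi1].
split => [x | C Cmax] /=.
- rewrite /xi1; case: ifP => [_ | _].
    rewrite -[eps]addr0 -(div0z n%:Z); apply: divz_addl_le => //.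
    by rewrite addr0 mulrC; apply: xi_ge.
  rewrite lerBrDr upsumE; apply: divz_addl_le => //.
  by rewrite lerD2r mulrC; apply: xi_ge.
- have [C0 C0max sumC0] := maxchainsum_attained (restr xi).
  apply: le_trans (_ : maxchainsum (restr (xi1 n xi)) + eps <= _).
    by rewrite lerD2r maxchainsum_ub.
  rewrite maxchainsum_xi1 addrC; apply: divz_addl_le => //.
  by rewrite mulrC addrC sumC0; apply: xi_chains.
Qed.
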